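(* Suppose the ST problem for $(D_{SC},F,B)$ has a positive answer. Then there is a solution $\{\pi(v): v \text{ a source of } D_{SC}\}$ such that (a) $\pi(u_{i,j})=P_{i,j}$ for every $i\in\mathcal U$ and $j\in I_i$, and (b) for every $t\in\{1,\dots,k\}$ there is $l\in\{1,\dots,m\}$ with $\pi(z_t)=(z_t,z)\circ P^h_l$ (concatenation of the arc $(z_t,z)$ with the horizontal path $P^h_l$).
   Context: Snow Team problem (ST): given a digraph $D=(\mathcal V,\mathcal A)$ whose underlying graph is connected, and $F:\mathcal V\to\{0,1\}$, $B:\mathcal V\to\mathbb N$, with $\mathbf k_B=\sum_vB(v)$: do there exist $\mathbf k_B$ directed walks, exactly $B(v)$ of which start at each $v$, such that, letting $H$ be the subgraph consisting of the vertices and arcs of these walks, all vertices of $F^{-1}(1)$ lie in one connected component of the underlying undirected graph of $H$? Such walks form a solution. Construction: $\mathcal U=\{1,\dots,n\}$, $\mathcal S=\{S_1,\dots,S_m\}$ with $S_t\subseteq\mathcal U$, $\bigcup_tS_t=\mathcal U$, and $1\le k\le m$. Write $S_t=\{x_1<\dots<x_{\ell(t)}\}$ and $I_i=\{j: i\in S_j\}$. The digraph $D_{SC}$ has vertices $u_i$ ($i\in\mathcal U$); $u_{i,j},u'_{i,j},v_{i,j},v'_{i,j}$ ($i\in\mathcal U$, $j\in I_i$); and $z,z_1,\dots,z_k$. Its arcs are those of the vertical paths $P_{i,j}=(u_{i,j},u_i,u'_{i,j},v_{i,j},v'_{i,j})$ ($i\in\mathcal U,j\in I_i$), of the horizontal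 paths $P^h_t=(z,v_{x_1,t},v_{x_2,t},\dots,v_{x_{\ell(t)},t})$ ($t\in\{1,\dots,m\}$, with $x_1<\dots<x_{\ell(t)}$ the elements of $S_t$), and the arcs $(z_l,z)$ for $l=1,\dots,k$. Set $F(v)=1$ for all vertices $v$, and $B(v)=1$ if $v$ is a source of $D_{SC}$ (i.e. $v\in\{u_{i,j}\}\cup\{z_1,\dots,z_k\}$) and $B(v)=0$ otherwise. Since $D_{SC}$ is acyclic, every solution consists of one directed path $\pi(v)$ starting at each source $v$. *)

From HB Require Import structures.
From mathcomp Require Import all_boot.
Set Implicit Arguments. Unset Strict Implicit. Unset Printing Implicit Defensive.

(* Generic Snow Team problem on a digraph given by a vertex predicate  *)
(* [vert] on a type V and an arc relation [arc] (arcs only join        *)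
(* vertices).                                                          *)
Section ST.
Variable V : eqType.

Definition is_walk (vert : pred V) (arc : rel V) (w : seq V) : bool :=
  if w is x :: w' then all vert w && path arc x w' else false.

Definition walk_arcs (w : seq V) : seq (V * V) := zip w (behead w).

Definition H_vert (W : seq (seq V)) (x : V) : bool := has (fun w => x \in w) W.
Definition H_arc (W : seq (seq V)) (x y : V) : bool :=
  has (fun w => (x, y) \in walk_arcs w) W.
Definition H_adj (W : seq (seq V)) (x y : V) : bool := H_arc W x y || H_arc W y x.
Definition H_connected (W : seq (seq V)) (x y : V) : Prop :=
  exists p : seq V, path (H_adj W) x p /\ last x p = y.

Definition ST_solution (vert : pred V) (arc : rel V) (F : V -> bool) (B : V -> nat)
    (W : seq (seq V)) : Prop :=
  [/\ all (is_walk vert arc) W,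
      (forall v, vert v -> count (fun w => ohead w == Some v) W = B v),
      (forall x, vert x -> F x -> H_vert W x) &
      (forall x y, vert x -> vert y -> F x -> F y -> H_connected W x y)].

Definition ST_positive (vert : pred V) (arc : rel V) (F : V -> bool) (B : V -> nat) : Prop :=
  exists W, ST_solution vert arc F B W.
End ST.

(* The digraph D_SC.  Indices are 0-based: U = 'I_n, t ranges over     *)
(* 'I_m, l over 'I_k.                                                  *)
Inductive vtx (n m k : nat) : Type :=
| VU of 'I_n
| VUij of 'I_n & 'I_m
| VU'ij of 'I_n & 'I_m
| VVij of 'I_n & 'I_m
| VV'ij of 'I_n & 'I_m
| VZ
| VZl of 'I_k.
Arguments VU {n m k}. Arguments VUij {n m k}. Arguments VU'ij {n m k}.
Arguments VVij {n m k}. Arguments VV'ij {n m k}. Arguments VZ {n m k}.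
Arguments VZl {n m k}.

Section Vtx.
Variables n m k : nat.
Local Notation code_t := (('I_n + ('I_4 * ('I_n * 'I_m))) + option 'I_k)%type.

Definition vtx_code (x : vtx n m k) : code_t :=
  match x with
  | VU i => inl (inl i)
  | VUij i j => inl (inr (@Ordinal 4 0 isT, (i, j)))
  | VU'ij i j => inl (inr (@Ordinal 4 1 isT, (i, j)))
  | VVij i j => inl (inr (@Ordinal 4 2 isT, (i, j)))
  | VV'ij i j => inl (inr (@Ordinal 4 3 isT, (i, j)))
  | VZ => inr None
  | VZl l => inr (Some l)
  end.

Definition vtx_decode (c : code_t) : vtx n m k :=
  match c with
  | inl (inl i) => VU i
  | inl (inr (a, (i, j))) =>
      match val a with 0 => VUij i j | 1 => VU'ij i j | 2 => VVij i j | _ => VV'ij i j end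
  | inr None => VZ
  | inr (Some l) => VZl l
  end.

Lemma vtx_codeK : cancel vtx_code vtx_decode.
Proof. by case. Qed.

HB.instance Definition _ := Finite.copy (vtx n m k) (can_type vtx_codeK).
End Vtx.

Section DSC.
Variables (n m k : nat) (S : 'I_m -> {set 'I_n}).
Local Notation V := (vtx n m k).

Definition Pv (i : 'I_n) (j : 'I_m) : seq V :=
  [:: VUij i j; VU i; VU'ij i j; VVij i j; VV'ij i j].

Definition Ph (t : 'I_m) : seq V :=
  VZ :: [seq VVij x t | x <- sort (fun a b : 'I_n => (a <= b)%N) (enum (S t))].

Definition DSC_vert (x : V) : bool :=
  match x with
  | VU _ => true
  | VUij i j | VU'ij i j | VVij i j | VV'ij i j => i \in S j
  | VZ => true
  | VZl _ => true
  end.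

Definition DSC_arc (x y : V) : bool :=
  [|| [exists i : 'I_n, exists j : 'I_m, (i \in S j) && ((x, y) \in walk_arcs (Pv i j))],
      [exists t : 'I_m, (x, y) \in walk_arcs (Ph t)]
    | [exists l : 'I_k, (x == VZl l) && (y == VZ)]].

Definition DSC_F (x : V) : bool := true.

(* B v = 1 iff v is a source, i.e. v = u_{i,j} or v = z_l *)
Definition DSC_B (x : V) : nat :=
  match x with
  | VUij _ _ => 1
  | VZl _ => 1
  | _ => 0
  end.
End DSC.
Arguments Pv {n m k} i j.
Arguments Ph {n m k} S t.
Arguments DSC_vert {n m k} S x.
Arguments DSC_arc {n m k} S x y.
Arguments DSC_F {n m k} x.
Arguments DSC_B {n m k} x.

From mathcomp Require Import all_boot.
Set Implicit Arguments. Unset Strict Implicit. Unset Printing Implicit Defensive.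

(* Every source starts exactly one walk.  The walk of [u_{i,j}] runs through
   [u_i], [u'_{i,j'}], [v_{i,j'}] and then stays in column [j'] (the vertices
   [v_{.,j'}], [v'_{.,j'}]); the walk of [z_t] runs through [z] into a column
   [c t].  Counting at [u_i] shows that each [u'_{i,j}] lies on a single walk.
   In a column [j] not of the form [c t], the walk through [v'_{y,j}] enters
   the column at some [v_{e,j}] with [e <= y], and distinct [v'_{y,j}] need
   distinct walks; a pigeonhole argument on [{y in S j | y <= a}] then shows
   that no walk uses a horizontal arc [(v_{a,j}, v_{b,j})] of that column, so
   every arc of [H] entering [v_{b,j}] comes from [u'_{b,j}].  Hence if some
   [i] belonged to no [S (c t)], the vertices indexed by [i] would be closed
   under adjacency in [H], and [u_i] would be disconnected from [z].  Thus the
   columns [c t] cover [U], and the paths [P_{i,j}] together with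
   [(z_t, z) ++ P^h_{c t}] form a solution. *)

Section WalkArcs.
Variable T : eqType.
Implicit Types (r : rel T) (x y h : T) (p w : seq T).

Lemma mem_zip (s t : seq T) x y : (x, y) \in zip s t -> x \in s /\ y \in t.
Proof.
elim: s t => [|a s IH] [|b t] //=; rewrite inE => /orP [/eqP [-> ->]|/IH [h1 h2]].
  by rewrite !inE !eqxx.
by rewrite !inE h1 h2 !orbT.
Qed.

Lemma mem_walk_arcs w x y : (x, y) \in walk_arcs w -> x \in w /\ y \in w.
Proof. by case: w => [|h p] // /mem_zip [hx hy]; rewrite !inE hy orbT. Qed.

Lemma path_walk_arcsE r h p :
  path r h p = all (fun xy => r xy.1 xy.2) (walk_arcs (h :: p)).
Proof. by elim: p h => [|a p IH] h //=; rewrite IH. Qed.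

Lemma path_walk_arcs r h p x y :
  path r h p -> (x, y) \in walk_arcs (h :: p) -> r x y.
Proof. by rewrite path_walk_arcsE => /allP/[apply]. Qed.

Lemma path_last_closed r (X : pred T) x p :
  (forall a b, X a -> r a b -> X b) -> X x -> path r x p -> X (last x p).
Proof.
move=> Xr; elim: p x => [|a p IH] x //= Xx /andP [xa ap].
exact: IH (Xr _ _ Xx xa) ap.
Qed.

Lemma path_last_sink r h p x :
  (forall y, ~~ r x y) -> path r h p -> x \in h :: p -> last h p = x.
Proof.
move=> sink; elim: p h => [|a p IH] h /=; first by rewrite inE => _ /eqP.
case/andP=> ha ap; rewrite inE => /predU1P [xh|]; last exact: IH.
by move: (sink a); rewrite xh ha.
Qed.

Lemma count_le1_eq (P : pred T) s x y :
  count P s <= 1 -> x \in s -> y \in s -> P x -> P y -> x = y.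
Proof.
elim: s => [|a s IH] //=; rewrite !inE => hc /predU1P[->|xs] /predU1P[->|ys] Px Py //.
- have : 0 < count P s by rewrite -has_count; apply/hasP; exists y.
  by move: hc; rewrite Px; case: (count P s).
- have : 0 < count P s by rewrite -has_count; apply/hasP; exists x.
  by move: hc; rewrite Py; case: (count P s).
- exact: IH (leq_trans (leq_addl _ _) hc) xs ys Px Py.
Qed.

Lemma path_key_head (f : T -> nat) x p z :
  path (relpre f ltn) x p -> z \in x :: p -> f x <= f z.
Proof.
move=> xp; rewrite inE => /predU1P [-> //|zp].
have ltn_tr : transitive (relpre f ltn) by move=> ? ? ? /= /ltn_trans; apply.
exact/ltnW/(allP (order_path_min ltn_tr xp)).
Qed.

Lemma path_key_last (f : T -> nat) x p z :
  path (relpre f ltn) x p -> z \in x :: p -> f z <= f (last x p).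
Proof.
elim: p x z => [|a p IH] x z /=; first by move=> _; rewrite inE => /eqP ->.
case/andP=> xa ap; rewrite inE => /predU1P [->|zp]; last exact: IH.
exact: leq_trans (ltnW xa) (IH _ _ ap (mem_head _ _)).
Qed.
End WalkArcs.

Lemma rel_onto_of_injective (T : finType) (A : {set T}) (R : T -> T -> bool) :
  (forall x, x \in A -> exists2 e, e \in A & R x e) ->
  (forall x y e, x \in A -> y \in A -> R x e -> R y e -> x = y) ->
  forall e, e \in A -> exists2 x, x \in A & R x e.
Proof.
move=> Rtot Rinj e eA.
pose f x := odflt x [pick e0 in A | R x e0].
have fA x : x \in A -> (f x \in A) && R x (f x).
  move=> xA; rewrite /f; case: pickP => [e0 /andP [-> ->] // | R0] /=.
  by case: (Rtot x xA) => e0 e0A Rxe0; move: (R0 e0); rewrite e0A Rxe0.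
have f_inj : {in A &, injective f}.
  move=> x y xA yA fxy; apply: (Rinj x y (f x) xA yA); first by case/andP: (fA x xA).
  by rewrite fxy; case/andP: (fA y yA).
have fAA : f @: A = A.
  apply/eqP; rewrite eqEcard card_in_imset // leqnn andbT.
  by apply/subsetP => _ /imsetP [x xA ->]; case/andP: (fA x xA).
move: eA; rewrite -{1}fAA => /imsetP [x xA ->]; exists x => //.
by case/andP: (fA x xA).
Qed.

Lemma inj_of_imset_subset (T U : finType) (A : {set T}) (f g : T -> U) :
  {in A &, injective g} -> g @: A \subset f @: A -> {in A &, injective f}.
Proof.
move=> g_inj gf; apply/imset_injP; rewrite eqn_leq leq_imset_card /=.
by rewrite -(card_in_imset g_inj) subset_leq_card.
Qed.

Section UnderlyingGraph.
Variables (T : finType) (W : seq (seq T)).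

Lemma connect_sym_H_adj : connect_sym (H_adj W).
Proof. by apply: sym_connect_sym => x y; rewrite /H_adj orbC. Qed.

Lemma connect_in_walk w a b : w \in W -> a \in w -> b \in w -> connect (H_adj W) a b.
Proof.
case: w => [|h p] // wW.
have /path_connect h_conn : path (H_adj W) h p.
  rewrite path_walk_arcsE; apply/allP => -[x y] xy.
  by rewrite /H_adj; apply/orP; left; apply/hasP; exists (h :: p).
move=> aw bw; apply: connect_trans (h_conn _ bw).
by rewrite connect_sym_H_adj; exact: h_conn.
Qed.

Lemma connect_H_connected x y : connect (H_adj W) x y -> H_connected W x y.
Proof. by case/connectP => p p_adj p_last; exists p. Qed.
End UnderlyingGraph.

Section DSCArcs.
Variables (n m k : nat) (S : 'I_m -> {set 'I_n}).
Local Notation V := (vtx n m k).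
Local Notation arc := (DSC_arc S).

Inductive arc_spec : V -> V -> Prop :=
| ArcUijU (i : 'I_n) (j : 'I_m) : arc_spec (VUij i j) (VU i)
| ArcUU'ij (i : 'I_n) (j : 'I_m) : arc_spec (VU i) (VU'ij i j)
| ArcU'ijVij (i : 'I_n) (j : 'I_m) : arc_spec (VU'ij i j) (VVij i j)
| ArcVijV'ij (i : 'I_n) (j : 'I_m) : arc_spec (VVij i j) (VV'ij i j)
| ArcZV (i : 'I_n) (j : 'I_m) : arc_spec VZ (VVij i j)
| ArcVV (a b : 'I_n) (j : 'I_m) : a < b -> arc_spec (VVij a j) (VVij b j)
| ArcZlZ (l : 'I_k) : arc_spec (VZl l) VZ.

Lemma row_arcP (t : 'I_m) (s : seq 'I_n) a x y :
  path (fun a b : 'I_n => a < b) a s ->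
  (x, y) \in zip [seq VVij b t | b <- a :: s] [seq VVij b t | b <- s] ->
  arc_spec x y.
Proof.
elim: s a => [|b s IH] a //= /andP [ab bs]; rewrite inE => /orP [/eqP [-> ->]|].
  exact: ArcVV.
exact: IH.
Qed.

Lemma Ph_arcP t x y : (x, y) \in walk_arcs (Ph S t) -> arc_spec x y.
Proof.
have : sorted (fun a b : 'I_n => a < b) (sort (fun a b : 'I_n => a <= b) (enum (S t))).
  rewrite -(@sorted_map _ _ val ltn) ltn_sorted_uniq_leq map_inj_uniq; last exact: val_inj.
  rewrite sort_uniq enum_uniq /= sorted_map.
  by apply: sort_sorted => a b; exact: leq_total.
rewrite /Ph /walk_arcs /=.
case: (sort _ _) => [|a s] //= sorted_s; rewrite inE => /orP [/eqP [-> ->]|].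
  exact: ArcZV.
exact: row_arcP.
Qed.

Lemma DSC_arcP x y : arc x y -> arc_spec x y.
Proof.
case/or3P.
- case/existsP => i /existsP [j /andP [_]].
  by rewrite /walk_arcs /= !inE => /or4P [] /eqP [-> ->]; constructor.
- by case/existsP => t; exact: Ph_arcP.
- by case/existsP => l /andP [/eqP -> /eqP ->]; constructor.
Qed.

Lemma arc_into_Vij (x : V) b j : arc x (VVij b j) ->
  [\/ x = VU'ij b j, x = VZ | exists2 a : 'I_n, a < b & x = VVij a j].
Proof.
move/DSC_arcP => sp; inversion sp.
- by constructor 1.
- by constructor 2.
- by constructor 3; exists a.
Qed.

Lemma V'ij_sink i j (y : V) : ~~ arc (VV'ij i j) y.
Proof. by apply/negP => /DSC_arcP sp; inversion sp. Qed.

Definition vertex_index (v : V) : option 'I_n :=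
  match v with
  | VU i | VUij i _ | VU'ij i _ | VVij i _ | VV'ij i _ => Some i
  | _ => None
  end.

Definition in_column (j : 'I_m) (v : V) : bool :=
  match v with VVij _ j' | VV'ij _ j' => j' == j | _ => false end.

Lemma in_column_Vij x j : in_column j (VVij x j). Proof. exact: eqxx. Qed.

Lemma in_column_V'ij x j : in_column j (VV'ij x j). Proof. exact: eqxx. Qed.

Definition column_rank (v : V) : nat :=
  match v with VVij a _ => a.*2 | VV'ij a _ => a.*2.+1 | _ => 0 end.

Lemma column_path j c p : in_column j c -> path arc c p ->
  all (in_column j) p && path (relpre column_rank ltn) c p.
Proof.
elim: p c => [|y p IH] c //= cj /andP [cy yp].
have /andP [yj cy_rank] : in_column j y && (column_rank c < column_rank y).
  move: (DSC_arcP cy) cj => sp; case: sp => //= [i j0 -> | a b j0 ab ->].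
    by rewrite ltnSn.
  by rewrite ltn_double.
by rewrite yj cy_rank; exact: IH.
Qed.

Lemma in_column_behead j (v a : V) s : in_column j v -> v \in a :: s ->
  ~~ in_column j a -> v \in s.
Proof. by move=> vj; rewrite inE => /predU1P [va|//]; rewrite -va vj. Qed.

Lemma in_column_path j l (v : V) x r : in_column j v -> path arc (VVij x l) r ->
  v \in VVij x l :: r -> l = j.
Proof.
move=> vj xr vin; case/andP: (column_path (in_column_Vij x l) xr) => /allP r_l _.
have vl : in_column l v by move: vin; rewrite inE => /predU1P [->|/r_l //]; exact: eqxx.
by case: v vj vl {vin r_l} => //= a j1 /eqP -> /eqP ->.
Qed.

Lemma column_path_last e j (r : seq V) y : path arc (VVij e j) r ->
  VV'ij y j \in VVij e j :: r -> last (VVij e j) r = VV'ij y j.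
Proof. by apply: path_last_sink => z; exact: V'ij_sink. Qed.

Inductive source_walk : seq V -> Prop :=
| ZlWalk0 t : source_walk [:: VZl t]
| ZlWalk1 t : source_walk [:: VZl t; VZ]
| ZlWalkCol t x l r : path arc (VVij x l) r -> source_walk [:: VZl t, VZ, VVij x l & r]
| UWalk0 i j : source_walk [:: VUij i j]
| UWalk1 i j : source_walk [:: VUij i j; VU i]
| UWalk2 i j j' : source_walk [:: VUij i j; VU i; VU'ij i j']
| UWalkCol i j j' r :
    path arc (VVij i j') r -> source_walk [:: VUij i j, VU i, VU'ij i j', VVij i j' & r].

Lemma source_walkP h p : 0 < DSC_B h -> path arc h p -> source_walk (h :: p).
Proof.
case: h => // [i j|t] _.
- case: p => [|y p] /=; first by move=> _; exact: UWalk0.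
  case/andP => /DSC_arcP sp; inversion sp; subst => {sp}.
  case: p => [|y p] /=; first by move=> _; exact: UWalk1.
  case/andP => /DSC_arcP sp; inversion sp; subst => {sp}.
  case: p => [|y p] /=; first by move=> _; exact: UWalk2.
  case/andP => /DSC_arcP sp; inversion sp; subst => {sp}.
  exact: UWalkCol.
- case: p => [|y p] /=; first by move=> _; exact: ZlWalk0.
  case/andP => /DSC_arcP sp; inversion sp; subst => {sp}.
  case: p => [|y p] /=; first by move=> _; exact: ZlWalk1.
  case/andP => /DSC_arcP sp; inversion sp; subst => {sp}.
  exact: ZlWalkCol.
Qed.
End DSCArcs.
Arguments in_column_Vij {n m k} x j.
Arguments in_column_V'ij {n m k} x j.

Section Solution.
Variables (n m k : nat) (S : 'I_m -> {set 'I_n}) (W : seq (seq (vtx n m k))).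
Hypothesis W_sol : ST_solution (DSC_vert S) (DSC_arc S) DSC_F DSC_B W.
Local Notation V := (vtx n m k).
Local Notation arc := (DSC_arc S).
Local Notation vert := (DSC_vert S).

Lemma solution_walkP w : w \in W ->
  [/\ source_walk S w, all vert w & exists h p, w = h :: p /\ path arc h p].
Proof.
case: W_sol => walks count_B _ _ wW.
move: (allP walks w wW); case: w wW => [|h p] //= wW /andP [/andP [vh vp] hp].
split; [|by rewrite vh vp|by exists h, p].
apply: source_walkP => //; rewrite -(count_B h vh) -has_count.
by apply/hasP; exists (h :: p).
Qed.

Lemma solution_cover x : vert x -> exists2 w, w \in W & x \in w.
Proof. by case: W_sol => _ _ cover _ vx; apply/hasP/cover. Qed.

Lemma solution_head_inj w1 w2 h : w1 \in W -> w2 \in W ->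
  ohead w1 = Some h -> ohead w2 = Some h -> w1 = w2.
Proof.
move=> w1W w2W h1 h2; case: (solution_walkP w1W) => _ w1vert [h' [p' [w1E _]]].
have vh : vert h by move: h1 w1vert; rewrite w1E => -[->] /andP [].
case: W_sol => _ count_B _ _.
apply: (@count_le1_eq _ (fun w => ohead w == Some h) W); rewrite ?h1 ?h2 //.
by rewrite count_B //; case: (h).
Qed.

Definition walk_from (h : V) : seq V :=
  nth [::] W (find (fun w => ohead w == Some h) W).

Lemma walk_fromE w h : w \in W -> ohead w = Some h -> walk_from h = w.
Proof.
move=> wW wh.
have hasW : has (fun w => ohead w == Some h) W by apply/hasP; exists w; rewrite ?wh.
apply: (solution_head_inj _ wW (eqP (nth_find [::] hasW)) wh).
by apply: mem_nth; rewrite -has_find.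
Qed.

Lemma U'ij_walk w e j : w \in W -> VU'ij e j \in w ->
  exists j0, [/\ e \in S j0, w = walk_from (VUij e j0) & nth VZ w 2 = VU'ij e j].
Proof.
have U'_notin_column j' x (r : seq V) : path arc (VVij x j') r -> VU'ij e j \notin r.
  case/(column_path (in_column_Vij x j'))/andP => /allP r_col _.
  by apply/negP => /r_col.
move=> wW; case: (solution_walkP wW) => sw wvert _; move: wW wvert.
case: w / sw => [t|t|t x l r xr|i j0|i j0|i j0 j'|i j0 j' r ir] wW; rewrite ?inE //=.
- by rewrite (negbTE (U'_notin_column _ _ _ xr)).
- move=> /and3P [iS _ _] /eqP [-> ->].
  by exists j0; rewrite (walk_fromE wW).
- rewrite (negbTE (U'_notin_column _ _ _ ir)) orbF.
  move=> /and4P [iS _ _ _] /eqP [-> ->].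
  by exists j0; rewrite (walk_fromE wW).
Qed.

(* The walks through [u_e] are those of the sources [u_{e,j0}]; their third
   vertices must cover all the [u'_{e,j}], of which there are as many. *)
Lemma U'ij_walk_unique e j w1 w2 : w1 \in W -> w2 \in W ->
  VU'ij e j \in w1 -> VU'ij e j \in w2 -> w1 = w2.
Proof.
pose J := [set j0 | e \in S j0].
pose third j0 := nth VZ (walk_from (VUij e j0)) 2.
have third_inj : {in J &, injective third}.
  apply: (@inj_of_imset_subset _ _ _ _ (VU'ij e)); first by move=> ? ? _ _ [].
  apply/subsetP => _ /imsetP [j1 j1J ->].
  have [w wW U'w] : exists2 w, w \in W & VU'ij e j1 \in w.
    by apply: solution_cover; move: j1J; rewrite inE.
  case: (U'ij_walk wW U'w) => j2 [eS wE thirdE].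
  by apply/imsetP; exists j2; rewrite ?inE // /third -wE thirdE.
move=> w1W w2W U'w1 U'w2.
case: (U'ij_walk w1W U'w1) => j1 [eS1 w1E third1].
case: (U'ij_walk w2W U'w2) => j2 [eS2 w2E third2].
have j12 : j1 = j2 by apply: third_inj; rewrite ?inE // /third -w1E -w2E third1 third2.
by rewrite w1E w2E j12.
Qed.

Variable m0 : 'I_m.

(* [m0] is a junk value, for a walk of [z_t] that stops before reaching a column. *)
Definition chosen_column (t : 'I_k) : 'I_m :=
  match walk_from (VZl t) with _ :: _ :: VVij _ l :: _ => l | _ => m0 end.

Lemma chosen_columnE w t x l r :
  w \in W -> w = [:: VZl t, VZ, VVij x l & r] -> chosen_column t = l.
Proof. by move=> wW wE; rewrite /chosen_column (walk_fromE wW) ?wE. Qed.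

Section UnchosenColumn.
Variable j : 'I_m.
Hypothesis j_unchosen : forall t, chosen_column t != j.

Lemma unchosen_column_walk w v : w \in W -> in_column j v -> v \in w ->
  exists e j0 r, [/\ w = [:: VUij e j0, VU e, VU'ij e j, VVij e j & r],
    path arc (VVij e j) r, e \in S j & v \in VVij e j :: r].
Proof.
move=> wW vj; case: (solution_walkP wW) => sw wvert _; move: wW wvert.
case: w / sw => [t|t|t x l r xr|i j0|i j0|i j0 j'|i j0 j' r ir] wW wvert vw;
  do ?[move: (in_column_behead vj vw isT) => {}vw]; rewrite ?in_nil // in vw.
- have lj := in_column_path vj xr vw.
  by move: (j_unchosen t); rewrite -lj (chosen_columnE wW erefl) eqxx.
- have j'j := in_column_path vj ir vw; subst j'.
  by exists i, j0, r; move: wvert => /= /and4P [_ _ iS _].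
Qed.

Definition share_walk (y e : 'I_n) : bool :=
  has (fun w => (VV'ij y j \in w) && (VU'ij e j \in w)) W.

Lemma share_walk_total y : y \in S j -> exists2 e, (e \in S j) && (e <= y) & share_walk y e.
Proof.
move=> yS; have [w wW yw] := solution_cover (yS : vert (VV'ij y j)).
case: (unchosen_column_walk wW (in_column_V'ij y j) yw) => e [j0 [r [wE er eS yr]]].
exists e; last by apply/hasP; exists w; rewrite // yw wE !inE eqxx !orbT.
case/andP: (column_path (in_column_Vij e j) er) => _ rank.
by rewrite eS /= -leq_Sdouble; exact: (path_key_head rank yr).
Qed.

Lemma share_walk_inj y1 y2 e : share_walk y1 e -> share_walk y2 e -> y1 = y2.
Proof.
move=> /hasP [w1 w1W /andP [y1w e1w]] /hasP [w2 w2W /andP [y2w e2w]].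
move: y2w; rewrite -(U'ij_walk_unique w1W w2W e1w e2w) => y2w.
case: (unchosen_column_walk w1W (in_column_V'ij y1 j) y1w) => e' [j0 [r [wE er _ y1r]]].
have y2r : VV'ij y2 j \in VVij e' j :: r by move: y2w; rewrite wE !inE.
by move: (column_path_last er y1r); rewrite (column_path_last er y2r) => -[].
Qed.

Lemma unchosen_column_no_row_arc w a b : w \in W ->
  (VVij a j, VVij b j) \in walk_arcs w -> a < b -> False.
Proof.
move=> wW ab_w ab; have [aw bw] := mem_walk_arcs ab_w.
case: (unchosen_column_walk wW (in_column_Vij b j) bw) => e [j0 [r [wE er eS br]]].
have ar : VVij a j \in VVij e j :: r by move: aw; rewrite wE !inE.
case/andP: (column_path (in_column_Vij e j) er) => _ rank.
pose A := [set y | (y \in S j) && (y <= a)].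
have eA : e \in A by rewrite inE eS /= -leq_double; exact: (path_key_head rank ar).
have A_total y : y \in A -> exists2 e', e' \in A & share_walk y e'.
  rewrite inE => /andP [yS ya]; case: (share_walk_total yS) => e' /andP [e'S e'y] ye'.
  by exists e'; rewrite // inE e'S (leq_trans e'y ya).
have [y yA /hasP [w' w'W /andP [yw' ew']]] :=
  rel_onto_of_injective A_total (fun y1 y2 e _ _ => @share_walk_inj y1 y2 e) eA.
have w'w : w' = w by apply: U'ij_walk_unique w'W wW ew' _; rewrite wE !inE eqxx !orbT.
have yr : VV'ij y j \in VVij e j :: r by move: yw'; rewrite w'w wE !inE.
have := path_key_last rank br; rewrite (column_path_last er yr) /= leq_Sdouble => b_le_y.
by move: yA; rewrite inE => /andP [_ /(leq_trans b_le_y)]; rewrite leqNgt ab.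
Qed.

Lemma unchosen_column_arc w x b : w \in W ->
  (x, VVij b j) \in walk_arcs w -> x = VU'ij b j.
Proof.
move=> wW xb_w; have [xw bw] := mem_walk_arcs xb_w.
case: (solution_walkP wW) => _ _ [h [p [wE hp]]].
have xb : arc x (VVij b j) by apply: (path_walk_arcs hp); rewrite -wE.
case: (unchosen_column_walk wW (in_column_Vij b j) bw) => e [j0 [r [{}wE er _ _]]].
case: (arc_into_Vij xb) => [// | xZ | [a ab xE]]; subst x.
- case/andP: (column_path (in_column_Vij e j) er) => /allP r_j _.
  by move: xw; rewrite wE !inE => /r_j.
- by case: (unchosen_column_no_row_arc wW xb_w ab).
Qed.
End UnchosenColumn.

Lemma walk_arc_index i w a b : (forall t, i \notin S (chosen_column t)) ->
  w \in W -> (a, b) \in walk_arcs w ->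
  (vertex_index a == Some i) = (vertex_index b == Some i).
Proof.
move=> i_unchosen wW ab_w; have [aw bw] := mem_walk_arcs ab_w.
case: (solution_walkP wW) => _ wvert [h [p [wE hp]]].
have ab : arc a b by apply: (path_walk_arcs hp); rewrite -wE.
have unchosen j : i \in S j -> forall t, chosen_column t != j.
  by move=> iS t; apply: contraNneq (i_unchosen t) => ->.
have sp := DSC_arcP ab.
move: ab_w (allP wvert a aw) (allP wvert b bw); clear aw bw ab.
case: a b / sp => //=.
- move=> b j ab_w _ bS; apply/esym/negbTE/eqP => -[bi]; subst b.
  by move: (unchosen_column_arc (unchosen _ bS) wW ab_w).
- move=> a b j _ ab_w aS bS; case: (boolP (i \in S j)) => iS.
    by move: (unchosen_column_arc (unchosen _ iS) wW ab_w).
  by apply/eqP/eqP => -[ei]; subst i; rewrite ?aS ?bS in iS.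
Qed.

Lemma chosen_columns_cover i : exists t, i \in S (chosen_column t).
Proof.
case: (boolP [exists t, i \in S (chosen_column t)]) => [/existsP // | /existsPn i_unchosen].
have index_closed a b : vertex_index a == Some i -> H_adj W a b -> vertex_index b == Some i.
  move=> ai /orP [] /hasP [w wW ab_w].
    by rewrite -(walk_arc_index i_unchosen wW ab_w).
  by rewrite (walk_arc_index i_unchosen wW ab_w).
case: W_sol => _ _ _ connected.
case: (connected (VU i) VZ isT isT erefl erefl) => p [p_adj p_last].
have := path_last_closed index_closed (eqxx (Some i) : vertex_index (VU i) == Some i) p_adj.
by rewrite p_last.
Qed.
End Solution.

Section StandardSolution.
Variables (n m k : nat) (S : 'I_m -> {set 'I_n}) (c : 'I_k -> 'I_m).
Hypothesis c_cover : forall i, exists t, i \in S (c t).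
Variable t0 : 'I_k.
Local Notation V := (vtx n m k).
Local Notation arc := (DSC_arc S).
Local Notation vert := (DSC_vert S).

Definition std_walks : seq (seq V) :=
  [seq Pv p.1 p.2 | p <- [seq p <- enum {: 'I_n * 'I_m} | p.1 \in S p.2]]
  ++ [seq VZl t :: Ph S (c t) | t <- enum 'I_k].

Lemma Pv_in_std i j : i \in S j -> Pv i j \in std_walks.
Proof.
move=> ij; rewrite mem_cat; apply/orP; left.
by apply/mapP; exists (i, j); rewrite // mem_filter ij mem_enum.
Qed.

Lemma Zl_walk_in_std t : VZl t :: Ph S (c t) \in std_walks.
Proof. by rewrite mem_cat; apply/orP; right; apply: map_f; rewrite mem_enum. Qed.

Lemma std_walksP w : w \in std_walks ->
  (exists i j, i \in S j /\ w = Pv i j) \/ (exists t, w = VZl t :: Ph S (c t)).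
Proof.
rewrite mem_cat => /orP [/mapP [[i j] /= + ->]|/mapP [t _ ->]].
  by rewrite mem_filter => /andP [ij _]; left; exists i, j.
by right; exists t.
Qed.

Lemma Ph_vert l : all vert (Ph S l : seq V).
Proof. by rewrite /Ph /= all_map; apply/allP => x; rewrite /= mem_sort mem_enum. Qed.

Lemma Ph_path l : path arc VZ (behead (Ph S l : seq V)).
Proof.
rewrite path_walk_arcsE; apply/allP => -[x y] xy.
by apply/or3P; apply: Or32; apply/existsP; exists l.
Qed.

Lemma std_walks_walks : all (is_walk vert arc) std_walks.
Proof.
apply/allP => w /std_walksP [[i [j [ij ->]]] | [t ->]]; rewrite /is_walk.
  apply/andP; split; first by rewrite /= ij.
  rewrite path_walk_arcsE; apply/allP => -[x y] xy.
  by apply/or3P; apply: Or31; apply/existsP; exists i; apply/existsP; exists j; rewrite ij.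
move: (Ph_vert (c t)) (Ph_path (c t)); rewrite /Ph /= => -> ->; rewrite andbT.
by apply/or3P; apply: Or33; apply/existsP; exists t; rewrite !eqxx.
Qed.

Lemma std_walks_count v : vert v -> count (fun w => ohead w == Some v) std_walks = DSC_B v.
Proof.
rewrite count_cat !count_map.
case: v => [i|i j|i j|i j|i j||t] /= v_vert;
  rewrite ?(@eq_count _ _ pred0 [seq p <- enum {: 'I_n * 'I_m} | p.1 \in S p.2]) ?count_pred0
          ?(@eq_count _ _ pred0 (enum 'I_k)) ?count_pred0 //.
- rewrite (@eq_count _ _ (pred1 (i, j))); last first.
    by move=> [a b] /=; apply/eqP/eqP => [[-> ->]|[-> ->]].
  rewrite count_uniq_mem; last by rewrite filter_uniq ?enum_uniq.
  by rewrite mem_filter v_vert mem_enum.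
- rewrite (@eq_count _ _ (pred1 t)); last by move=> a /=; apply/eqP/eqP => [[->]|->].
  rewrite count_uniq_mem; last by rewrite -enumT; exact: enum_uniq.
  by have := mem_enum 'I_k t; rewrite enumT inE /= => ->.
Qed.

Lemma Vij_in_Zl_walk i t : i \in S (c t) -> VVij i (c t) \in VZl t :: Ph S (c t).
Proof.
move=> iS; rewrite !inE; apply/orP; right; apply/orP; right.
by apply: map_f; rewrite mem_sort mem_enum.
Qed.

Lemma std_walks_cover x : vert x -> H_vert std_walks x.
Proof.
move=> x_vert; apply/hasP; case: x x_vert => [i|i j|i j|i j|i j||t] /= x_vert.
- case: (c_cover i) => t it; exists (Pv i (c t)); first exact: Pv_in_std.
  by rewrite /Pv !inE eqxx orbT.
all: try by exists (Pv i j); [exact: Pv_in_std | rewrite /Pv !inE eqxx ?orbT].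
- by exists (VZl t0 :: Ph S (c t0)); [exact: Zl_walk_in_std | rewrite !inE eqxx orbT].
- by exists (VZl t :: Ph S (c t)); [exact: Zl_walk_in_std | rewrite !inE eqxx].
Qed.

Lemma connect_std_Z x : vert x -> connect (H_adj std_walks) x VZ.
Proof.
move=> /std_walks_cover /hasP [w wW xw].
have Zin t : VZ \in VZl t :: Ph S (c t) by rewrite !inE eqxx orbT.
case: (std_walksP wW) => [[i [j [ij wE]]] | [t wE]]; subst w; last first.
  exact: connect_in_walk wW xw (Zin t).
case: (c_cover i) => t it.
have Uin j' : VU i \in (Pv i j' : seq V) by rewrite /Pv !inE eqxx orbT.
have Vin : VVij i (c t) \in (Pv i (c t) : seq V) by rewrite /Pv !inE eqxx !orbT.
apply: connect_trans (connect_in_walk wW xw (Uin j)) _.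
apply: connect_trans (connect_in_walk (Pv_in_std it) (Uin _) Vin) _.
exact: connect_in_walk (Zl_walk_in_std t) (Vij_in_Zl_walk it) (Zin t).
Qed.

Lemma std_walks_solution : ST_solution vert arc DSC_F DSC_B std_walks.
Proof.
split; [exact: std_walks_walks | exact: std_walks_count | by move=> x /std_walks_cover |].
move=> x y x_vert y_vert _ _; apply: connect_H_connected.
by apply: connect_trans (connect_std_Z x_vert) _; rewrite connect_sym_H_adj; exact: connect_std_Z.
Qed.
End StandardSolution.

Theorem lemma7 (n m k : nat) (S : 'I_m -> {set 'I_n})
    (hcover : \bigcup_(t < m) S t = [set: 'I_n])
    (hk1 : (1 <= k)%N) (hkm : (k <= m)%N) :
  ST_positive (DSC_vert S) (DSC_arc S) (@DSC_F n m k) (@DSC_B n m k) ->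
  exists W : seq (seq (vtx n m k)),
    [/\ ST_solution (DSC_vert S) (DSC_arc S) (@DSC_F n m k) (@DSC_B n m k) W,
        (forall (i : 'I_n) (j : 'I_m), i \in S j -> Pv i j \in W) &
        (forall t : 'I_k, exists l : 'I_m, VZl t :: Ph S l \in W)].
Proof.
case=> W W_sol.
pose c := chosen_column W (Ordinal (leq_trans hk1 hkm)).
have c_cover i : exists t, i \in S (c t) := chosen_columns_cover W_sol _ i.
exists (std_walks S c); split.
- exact: std_walks_solution c_cover (Ordinal hk1).
- exact: Pv_in_std.
- by move=> t; exists (c t); exact: Zl_walk_in_std.
Qed.
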